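(* Let $n\ge2$ and let $w_{12},w_{13},w_{23}$ be real numbers. For any sequence $S\in\mathcal{R}(n;1)$ (a minimal-length sequence transferring all $n$ disks from Peg 1 back to Peg 1 in which the largest disk is moved), played alternately by Anh (odd-numbered moves) and Bao (even-numbered moves), the total score (Anh's points minus Bao's points) is $\Delta_{11}(n)=3w_{23}-w_{12}-w_{13}$ if $n$ is odd, and $\Delta_{11}(n)=w_{12}+w_{13}-w_{23}$ if $n$ is even.
   Context: Tower of Hanoi on three pegs (labeled 1, 2, 3) with disks $1<2<\dots<n$ ordered by size; a legal move transfers the top disk of one peg to a different peg that is empty or has a larger top disk. A move between Peg $i$ and Peg $j$ (either direction) is a move along edge $\{i,j\}$ and earns the mover the real weight $w_{ij}=w_{ji}$. The minimal algorithm $\mathcal{M}(n;i\to j)$ ($i\ne j$, $k$ the third peg) is defined recursively: $\mathcal{M}(1;i\to j)$ is the single move of disk 1 from $i$ to $j$; for $n\ge2$, $\mathcal{M}(n;i\to j)$ is $\mathcal{M}(n-1;i\to k)$, then the move of disk $n$ from $i$ to $j$, then $\mathcal{M}(n-1;k\to j)$. For a peg $i$ and $n\ge2$, the set $\mathcal{R}(n;i)$ of minimal return sequences (each of length $2^{n+1}-1$) is defined recursively: for $\{i,a,b\}=\{1,2,3\}$ (either labeling of the two other pegs as $a,b$), $\mathcal{R}(n;i)$ contains the sequence $\mathcal{M}(n-1;i\to b)$, disk $n$ from $i$ to $a$, $\mathcal{M}(n-1;b\to i)$, disk $n$ from $a$ to $b$, $\mathcal{M}(n-1;i\to a)$, disk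 $n$ from $b$ to $i$, $\mathcal{M}(n-1;a\to i)$; and, if $n\ge3$, also every sequence $\mathcal{M}(n-1;i\to b)$, disk $n$ from $i$ to $a$, $T$, disk $n$ from $a$ to $i$, $\mathcal{M}(n-1;b\to i)$, where $T\in\mathcal{R}(n-1;b)$ (acting on disks $1,\dots,n-1$). When a move sequence is played in the two-player game, Anh makes moves $1,3,5,\dots$ and Bao makes moves $2,4,\dots$, each earning the weight of the moves they make. *)

From Stdlib Require Import Reals List.
Import ListNotations.
Open Scope R_scope.

Inductive peg : Type := P1 | P2 | P3.

(* the third peg, different from i and j (meaningful when i <> j) *)
Definition third (i j : peg) : peg :=
  match i, j with
  | P1, P2 | P2, P1 => P3
  | P1, P3 | P3, P1 => P2
  | P2, P3 | P3, P2 => P1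
  | P1, P1 => P2 | P2, P2 => P3 | P3, P3 => P1
  end.

(* a move: (disk, source peg, target peg) *)
Definition move : Type := (nat * peg * peg)%type.

Fixpoint hanoi (n : nat) (i j : peg) : list move :=
  match n with
  | O => []
  | S m => hanoi m i (third i j) ++ (S m, i, j) :: hanoi m (third i j) j
  end.

Definition all_distinct (i a b : peg) : Prop := i <> a /\ i <> b /\ a <> b.

Inductive minret : nat -> peg -> list move -> Prop :=
| minret_base : forall n i a b,
    (2 <= n)%nat -> all_distinct i a b ->
    minret n i
      (hanoi (n - 1) i b ++ (n, i, a) :: hanoi (n - 1) b i ++
       (n, a, b) :: hanoi (n - 1) i a ++ (n, b, i) :: hanoi (n - 1) a i)
| minret_rec : forall n i a b T,
    (3 <= n)%nat -> all_distinct i a b -> minret (n - 1) b T ->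
    minret n i
      (hanoi (n - 1) i b ++ (n, i, a) :: T ++ (n, a, i) :: hanoi (n - 1) b i).

(* weight of the edge {p,q}, symmetric; (p = q never occurs) *)
Definition edge_w (w12 w13 w23 : R) (p q : peg) : R :=
  match p, q with
  | P1, P2 | P2, P1 => w12
  | P1, P3 | P3, P1 => w13
  | P2, P3 | P3, P2 => w23
  | _, _ => 0
  end.

Definition move_w (w12 w13 w23 : R) (m : move) : R :=
  match m with (_, p, q) => edge_w w12 w13 w23 p q end.

(* Anh (moves 1,3,5,...) points minus Bao (moves 2,4,...) points. *)
Fixpoint score (w12 w13 w23 : R) (s : list move) : R :=
  match s with
  | [] => 0
  | m :: s' => move_w w12 w13 w23 m - score w12 w13 w23 s'
  end.

(* Split every sequence at the moves of the largest disk.  The pieces between them have odd length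
   (2^k - 1 moves), so the score is additive up to alternating signs: the score of M(k; i -> j)
   is w_ij for k odd and (w12 + w13 + w23) - 2 w_ij for k even, and the score of any sequence in
   R(n; i) depends only on the parity of n and on the weight of the edge opposite to i. *)
From Stdlib Require Import Reals List Lia.
Open Scope R_scope.

Lemma pow2_pred_odd (m : nat) : Nat.Odd (2 ^ S m - 1).
Proof.
  exists (2 ^ m - 1)%nat.
  rewrite Nat.pow_succ_r'.
  pose proof (Nat.pow_nonzero 2 m ltac:(lia)); lia.
Qed.

Lemma hanoi_length (m : nat) (i j : peg) : length (hanoi m i j) = (2 ^ m - 1)%nat.
Proof.
  revert i j; induction m as [|m IH]; intros i j; [reflexivity|].
  cbn [hanoi]; rewrite length_app; cbn [length]; rewrite !IH, Nat.pow_succ_r'.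
  pose proof (Nat.pow_nonzero 2 m ltac:(lia)); lia.
Qed.

Lemma hanoi_succ (m : nat) (i j : peg) :
  hanoi (S m) i j = hanoi m i (third i j) ++ (S m, i, j) :: hanoi m (third i j) j.
Proof. reflexivity. Qed.

Lemma minret_length (n : nat) (i : peg) (s : list move) :
  minret n i s -> length s = (2 ^ S n - 1)%nat.
Proof.
  induction 1 as [n i a b Hn _ | n i a b T Hn _ _ IH];
    destruct n as [|n]; try lia; rewrite Nat.sub_succ, Nat.sub_0_r in *;
    repeat (rewrite length_app; cbn [length]);
    rewrite ?IH, !hanoi_length, !Nat.pow_succ_r';
    pose proof (Nat.pow_nonzero 2 n ltac:(lia)); lia.
Qed.

Lemma odd_succ_negb (p : nat) : Nat.odd (S p) = negb (Nat.odd p).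
Proof. rewrite Nat.odd_succ, <- Nat.negb_odd; reflexivity. Qed.

Section Score.

Variables w12 w13 w23 : R.

Local Notation score := (score w12 w13 w23).
Local Notation edge_w := (edge_w w12 w13 w23).
Local Notation total := (w12 + w13 + w23).

Definition opposite_w (i : peg) : R :=
  match i with P1 => w23 | P2 => w13 | P3 => w12 end.

Lemma score_app (s t : list move) :
  score (s ++ t) = score s + (-1) ^ length s * score t.
Proof. induction s as [|m s IH]; cbn [app score length pow]; [|rewrite IH]; ring. Qed.

Lemma score_app_odd (s t : list move) :
  Nat.Odd (length s) -> score (s ++ t) = score s - score t.
Proof. intros [k Hk]; rewrite score_app, Hk, Nat.add_1_r, pow_1_odd; ring. Qed.

Lemma score_app_hanoi (m : nat) (i j : peg) (t : list move) :
  score (hanoi (S m) i j ++ t) = score (hanoi (S m) i j) - score t.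
Proof. apply score_app_odd; rewrite hanoi_length; apply pow2_pred_odd. Qed.

Lemma score_hanoi (m : nat) (i j : peg) : i <> j ->
  score (hanoi (S m) i j) =
  if Nat.odd (S m) then edge_w i j else total - 2 * edge_w i j.
Proof.
  revert i j; induction m as [|m IH]; intros i j Hij.
  - destruct i, j; cbn; try congruence; ring.
  - rewrite hanoi_succ.
    rewrite score_app_hanoi; cbn [score move_w].
    rewrite !IH by (destruct i, j; cbn; congruence).
    rewrite !(odd_succ_negb (S m)), odd_succ_negb.
    destruct (Nat.odd m), i, j; cbn; try congruence; ring.
Qed.

Lemma score_minret (n : nat) (i : peg) (s : list move) : minret n i s ->
  score s =
  if Nat.odd n then 4 * opposite_w i - total else total - 2 * opposite_w i.
Proof.
  induction 1 as [n i a b Hn [Hia [Hib Hab]] | n i a b T Hn [Hia [Hib Hab]] HT IH];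
    destruct n as [|[|n]]; try lia; rewrite Nat.sub_succ, Nat.sub_0_r in *.
  - repeat (rewrite score_app_hanoi; cbn [score move_w]).
    rewrite !score_hanoi by congruence; rewrite !odd_succ_negb.
    destruct (Nat.odd n), i, a, b; cbn; try congruence; ring.
  - rewrite score_app_hanoi; cbn [score move_w].
    rewrite score_app_odd by (rewrite (minret_length _ _ _ HT); apply pow2_pred_odd).
    cbn [score move_w].
    rewrite IH, !score_hanoi by congruence; rewrite !odd_succ_negb.
    destruct (Nat.odd n), i, a, b; cbn; try congruence; ring.
Qed.

End Score.

Theorem lemma2 (n : nat) (w12 w13 w23 : R) (S : list move) :
  (2 <= n)%nat -> minret n P1 S ->
  score w12 w13 w23 S =
    (if Nat.odd n then 3 * w23 - w12 - w13 else w12 + w13 - w23).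
Proof.
  intros _ HS; rewrite (score_minret w12 w13 w23 n P1 S HS); cbn [opposite_w].
  destruct (Nat.odd n); ring.
Qed.
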